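(* Let $\alpha\in\mathbb R$ and $n\ge1$. There is a one-to-one correspondence between $(2n+1)$-dimensional $\alpha$-cosymplectic Lie algebras $(\mathfrak g,\eta,\omega)$ and pairs consisting of a $2n$-dimensional symplectic Lie algebra $(\mathfrak h,\Omega)$ together with a derivation $D\in\mathrm{Der}(\mathfrak h)$ such that $D+\alpha I$ is an infinitesimal symplectic transformation of $(\mathfrak h,\Omega)$. The correspondence sends $(\mathfrak g,\eta,\omega)$ to $\mathfrak h=\ker\eta$, $\Omega=\omega|_{\mathfrak h\times\mathfrak h}$, $D=\mathrm{ad}_\xi|_{\mathfrak h}$ ($\xi$ the Reeb vector), and conversely $(\mathfrak h,\Omega,D)$ to $\mathfrak g=\mathbb R\xi\oplus\mathfrak h$ with $[x,y]=[x,y]_{\mathfrak h}$, $[\xi,x]=Dx$ ($x,y\in\mathfrak h$), $\eta(\xi)=1$, $\eta|_{\mathfrak h}=0$, $\omega(\xi,\cdot)=0$, $\omega|_{\mathfrak h\times\mathfrak h}=\Omega$.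
   Context: For a Lie algebra, $d\eta(x,y)=-\eta([x,y])$ and $d\omega(x,y,z)=-\omega([x,y],z)-\omega([y,z],x)-\omega([z,x],y)$. An almost cosymplectic structure on a $(2n+1)$-dimensional Lie algebra $\mathfrak g$ is a pair $(\eta,\omega)$, $\eta\in\mathfrak g^*$, $\omega$ a $2$-form, with $\eta\wedge\omega^n\neq0$; its Reeb vector $\xi$ satisfies $\eta(\xi)=1$, $\omega(\xi,\cdot)=0$. It is $\alpha$-cosymplectic if $d\eta=0$ and $d\omega=2\alpha\,\eta\wedge\omega$. A symplectic structure on a $2n$-dimensional Lie algebra $\mathfrak h$ is a closed $2$-form $\Omega$ with $\Omega^n\neq0$. A linear map $\theta:\mathfrak h\to\mathfrak h$ is an infinitesimal symplectic transformation if $\theta^T\circ\Omega+\Omega\circ\theta=0$, equivalently if $(x,y)\mapsto\Omega(\theta x,y)$ is symmetric. *)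

From HB Require Import structures.
From mathcomp Require Import all_boot all_order all_algebra all_fingroup.
From mathcomp Require Import reals.
Set Implicit Arguments. Unset Strict Implicit. Unset Printing Implicit Defensive.
Import Order.TTheory GRing.Theory Num.Theory.
Local Open Scope ring_scope.

Section Defs.
Variables (R : fieldType) (V : lmodType R).

Definition bilinear_map (W : lmodType R) (b : V -> V -> W) : Prop :=
  (forall a x y z, b (a *: x + y) z = a *: b x z + b y z) /\
  (forall a x y z, b x (a *: y + z) = a *: b x y + b x z).

Definition is_lie (br : V -> V -> V) : Prop :=
  bilinear_map br /\ (forall x, br x x = 0) /\
  (forall x y z, br x (br y z) + br y (br z x) + br z (br x y) = 0).

Definition linear_form (eta : V -> R) : Prop :=
  forall a x y, eta (a *: x + y) = a * eta x + eta y.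

Definition two_form (om : V -> V -> R) : Prop :=
  (forall a x y z, om (a *: x + y) z = a * om x z + om y z) /\
  (forall a x y z, om x (a *: y + z) = a * om x y + om x z) /\
  (forall x, om x x = 0).

Definition d1 (br : V -> V -> V) (eta : V -> R) (x y : V) : R := - eta (br x y).
Definition d2 (br : V -> V -> V) (om : V -> V -> R) (x y z : V) : R :=
  - om (br x y) z - om (br y z) x - om (br z x) y.

Definition wedge12 (eta : V -> R) (om : V -> V -> R) (x y z : V) : R :=
  eta x * om y z + eta y * om z x + eta z * om x y.

(* k-th entry of a finite family, 0 out of range *)
Definition fam_at (m : nat) (v : 'I_m -> V) (k : nat) : V :=
  oapp v 0 (insub k).

(* (om^n)(v_0,...,v_{2n-1}), up to a fixed positive normalising constant *)
Definition omega_pow (n : nat) (om : V -> V -> R) (v : 'I_(n.*2) -> V) : R :=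
  \sum_(s : 'S_(n.*2)) (-1) ^+ s *
    \prod_(i < n) om (fam_at (v \o s) i.*2) (fam_at (v \o s) i.*2.+1).

(* (eta /\ om^n)(v_0,...,v_{2n}), up to a fixed positive normalising constant *)
Definition eta_omega_pow (n : nat) (eta : V -> R) (om : V -> V -> R)
    (v : 'I_(n.*2.+1) -> V) : R :=
  \sum_(s : 'S_(n.*2.+1)) (-1) ^+ s *
    (eta (fam_at (v \o s) 0) *
     \prod_(i < n) om (fam_at (v \o s) i.*2.+1) (fam_at (v \o s) i.*2.+2)).


Definition almost_cosymplectic (n : nat) (eta : V -> R) (om : V -> V -> R) : Prop :=
  linear_form eta /\ two_form om /\ exists v, @eta_omega_pow n eta om v != 0.

Definition alpha_cosymplectic (n : nat) (br : V -> V -> V) (alpha : R)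
    (eta : V -> R) (om : V -> V -> R) : Prop :=
  almost_cosymplectic n eta om /\
  (forall x y, d1 br eta x y = 0) /\
  (forall x y z, d2 br om x y z = 2 * alpha * wedge12 eta om x y z).

Definition is_reeb (eta : V -> R) (om : V -> V -> R) (xi : V) : Prop :=
  eta xi = 1 /\ forall y, om xi y = 0.

Definition symplectic (n : nat) (br : V -> V -> V) (om : V -> V -> R) : Prop :=
  two_form om /\ (forall x y z, d2 br om x y z = 0) /\
  exists v, @omega_pow n om v != 0.

Definition derivation (br : V -> V -> V) (D : V -> V) : Prop :=
  (forall a x y, D (a *: x + y) = a *: D x + D y) /\
  (forall x y, D (br x y) = br (D x) y + br x (D y)).

Definition inf_symplectic (om : V -> V -> R) (theta : V -> V) : Prop :=
  forall x y, om (theta x) y + om x (theta y) = 0.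

End Defs.

(* bracket on R xi (+) h :  [(s,x),(t,y)] = (0, [x,y]_h + s D y - t D x) *)
Definition ext_br (R : fieldType) (H : lmodType R) (brh : H -> H -> H)
    (D : H -> H) (p q : (R^o * H)%type) : (R^o * H)%type :=
  (0, brh p.2 q.2 + p.1 *: D q.2 - q.1 *: D p.2).

(* The nondegeneracy of [eta /\ om^n] forces every vector in the common radical of
   [eta] and [om] to vanish, and, expanded along [eta], gives [om^n <> 0] on [ker eta].
   A skew form in odd dimension has a nontrivial radical, so [om] has a radical
   vector, normalised by [eta] into the Reeb vector [xi].  Since [d eta = 0],
   [ker eta] is a subalgebra on which [ad xi] acts as a derivation; restricting
   [d om = 2 alpha eta /\ om] to [ker eta] gives [d Om = 0], and evaluating it at
   [(xi, x, y)] gives [Om (D x) y + Om x (D y) = - 2 alpha Om x y].  Read backwards,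
   the same identities show that the semidirect bracket on [R xi (+) h] is a Lie
   bracket for which [(eta, om)] is alpha-cosymplectic. *)

From HB Require Import structures.
From mathcomp Require Import all_boot all_order all_algebra all_fingroup.
From mathcomp Require Import reals.
From mathcomp Require Import ring zify.
From mathcomp Require boolp.
Import Order.TTheory GRing.Theory Num.Theory.
Local Open Scope ring_scope.
Set Implicit Arguments. Unset Strict Implicit. Unset Printing Implicit Defensive.

Lemma self_add_eq0 (R : numDomainType) (x : R) : x + x = 0 -> x = 0.
Proof. by move/eqP; rewrite -mulr2n mulrn_eq0 => /eqP. Qed.

Section LinearMaps.
Variables (R : pzRingType) (U W : lmodType R) (f : U -> W) (f_lin : linear f).

Definition lin_pack : {linear U -> W} := HB.pack f (GRing.isLinear.Build R U W _ f f_lin).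

Lemma lin0 : f 0 = 0. Proof. exact: (linear0 lin_pack). Qed.
Lemma linD x y : f (x + y) = f x + f y. Proof. exact: (linearD lin_pack). Qed.
Lemma linN x : f (- x) = - f x. Proof. exact: (linearN lin_pack). Qed.
Lemma linB x y : f (x - y) = f x - f y. Proof. exact: (linearB lin_pack). Qed.
Lemma linZ a x : f (a *: x) = a *: f x. Proof. exact: (linearZ_LR lin_pack). Qed.
Lemma lin_sum (I : Type) (r : seq I) (P : pred I) (g : I -> U) :
  f (\sum_(i <- r | P i) g i) = \sum_(i <- r | P i) f (g i).
Proof. exact: (linear_sum lin_pack). Qed.

End LinearMaps.

Section Forms.
Variables (R : fieldType) (V : lmodType R).

Section LinearForm.
Variables (eta : V -> R) (eta_lin : linear_form eta).

Lemma linear_form_linear : linear (eta : V -> R^o).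
Proof. exact: eta_lin. Qed.

Lemma etaD x y : eta (x + y) = eta x + eta y. Proof. exact: linD linear_form_linear _ _. Qed.
Lemma etaZ a x : eta (a *: x) = a * eta x. Proof. exact: linZ linear_form_linear _ _. Qed.
Lemma etaB x y : eta (x - y) = eta x - eta y. Proof. exact: linB linear_form_linear _ _. Qed.

End LinearForm.

Section TwoForm.
Variables (om : V -> V -> R) (om_form : two_form om).

Lemma two_form_linearl z : linear (om^~ z : V -> R^o).
Proof. by case: om_form => h _ a x y; apply: h. Qed.
Lemma two_form_linearr z : linear (om z : V -> R^o).
Proof. by case: om_form => _ [h _] a x y; apply: h. Qed.

Lemma om0l y : om 0 y = 0. Proof. exact: lin0 (two_form_linearl y). Qed.
Lemma omDl x y z : om (x + y) z = om x z + om y z. Proof. exact: linD (two_form_linearl z) _ _. Qed.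
Lemma omDr x y z : om z (x + y) = om z x + om z y. Proof. exact: linD (two_form_linearr z) _ _. Qed.
Lemma omZl a x z : om (a *: x) z = a * om x z. Proof. exact: linZ (two_form_linearl z) _ _. Qed.
Lemma omZr a x z : om z (a *: x) = a * om z x. Proof. exact: linZ (two_form_linearr z) _ _. Qed.
Lemma omNl x z : om (- x) z = - om x z. Proof. exact: linN (two_form_linearl z) _. Qed.
Lemma omBl x y z : om (x - y) z = om x z - om y z. Proof. exact: linB (two_form_linearl z) _ _. Qed.
Lemma omBr x y z : om z (x - y) = om z x - om z y. Proof. exact: linB (two_form_linearr z) _ _. Qed.
Lemma om_suml (I : Type) (r : seq I) (P : pred I) (g : I -> V) y :
  om (\sum_(i <- r | P i) g i) y = \sum_(i <- r | P i) om (g i) y.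
Proof. exact: lin_sum (two_form_linearl y) _ _ _ _. Qed.
Lemma om_sumr (I : Type) (r : seq I) (P : pred I) (g : I -> V) y :
  om y (\sum_(i <- r | P i) g i) = \sum_(i <- r | P i) om y (g i).
Proof. exact: lin_sum (two_form_linearr y) _ _ _ _. Qed.

Lemma two_form_skew x y : om x y = - om y x.
Proof.
case: om_form => _ [_ om_alt]; apply/eqP; rewrite -addr_eq0.
by have := om_alt (x + y); rewrite omDl !omDr !om_alt add0r addr0 => ->.
Qed.

End TwoForm.

Section Bracket.
Variables (br : V -> V -> V) (br_bil : bilinear_map br).

Lemma bilinear_linearl z : linear (br^~ z). Proof. by case: br_bil => h _ a x y; apply: h. Qed.
Lemma bilinear_linearr z : linear (br z). Proof. by case: br_bil => _ h a x y; apply: h. Qed.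

Lemma br0l y : br 0 y = 0. Proof. exact: lin0 (bilinear_linearl y). Qed.
Lemma brDl x y z : br (x + y) z = br x z + br y z. Proof. exact: linD (bilinear_linearl z) _ _. Qed.
Lemma brDr x y z : br z (x + y) = br z x + br z y. Proof. exact: linD (bilinear_linearr z) _ _. Qed.
Lemma brZl a x z : br (a *: x) z = a *: br x z. Proof. exact: linZ (bilinear_linearl z) _ _. Qed.
Lemma brZr a x z : br z (a *: x) = a *: br z x. Proof. exact: linZ (bilinear_linearr z) _ _. Qed.
Lemma brNr x z : br z (- x) = - br z x. Proof. exact: linN (bilinear_linearr z) _. Qed.

Lemma bracket_skew (br_alt : forall x, br x x = 0) x y : br x y = - br y x.
Proof.
apply/eqP; rewrite -addr_eq0.
by have := br_alt (x + y); rewrite brDl !brDr !br_alt add0r addr0 => ->.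
Qed.

End Bracket.

Lemma lie_ad_derivation (br : V -> V -> V) : is_lie br ->
  forall z x y, br z (br x y) = br (br z x) y + br x (br z y).
Proof.
move=> [bl [al jac]] z x y; have := jac z x y.
rewrite (bracket_skew bl al y z) (brNr bl) (bracket_skew bl al y (br z x)) => /eqP.
by rewrite -addrA -opprD subr_eq0 addrC => /eqP.
Qed.

End Forms.

Section AlternatingSum.
Variables (R : numDomainType) (V : lmodType R) (N : nat) (T : ('I_N -> V) -> R).

Definition alt_sum (v : 'I_N -> V) : R := \sum_(s : 'S_N) (-1) ^+ s * T (v \o s).

Lemma alt_sum_perm (v : 'I_N -> V) (t : 'S_N) :
  alt_sum (v \o t) = (-1) ^+ t * alt_sum v.
Proof.
rewrite /alt_sum (reindex_inj (mulIg t^-1)%g) mulr_sumr; apply: eq_bigr => s _.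
have -> : (v \o t) \o (s * t^-1)%g = v \o s.
  by apply: boolp.funext => x /=; rewrite permM permKV.
by rewrite odd_permM odd_permV signr_addb mulrA [_ * (-1) ^+ t]mulrC.
Qed.

Lemma alt_sum_repeat (v : 'I_N -> V) a b : a != b -> v a = v b -> alt_sum v = 0.
Proof.
move=> neq_ab eq_vab; apply: self_add_eq0.
have {1}<- : v \o tperm a b = v.
  by apply: boolp.funext => x /=; case: tpermP => [->|->|].
by rewrite alt_sum_perm odd_tperm neq_ab mulN1r addNr.
Qed.

Definition upd (v : 'I_N -> V) k (z : V) i := if i == k then z else v i.

Lemma upd_comp v k z (s : 'S_N) : upd v k z \o s = upd (v \o s) (s^-1 k)%g z.
Proof.
apply: boolp.funext => x /=; rewrite /upd.
by rewrite -[X in _ = if X then _ else _](inj_eq (@perm_inj _ s)) permKV.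
Qed.

Lemma upd_id v k : upd v k (v k) = v.
Proof. by apply: boolp.funext => x; rewrite /upd; case: eqP => // ->. Qed.

Hypothesis T_linear : forall u k a x y,
  T (upd u k (a *: x + y)) = a * T (upd u k x) + T (upd u k y).

Lemma alt_sum_linear v k : linear (fun z => alt_sum (upd v k z) : R^o).
Proof.
move=> a x y.
change (alt_sum (upd v k (a *: x + y)) = a * alt_sum (upd v k x) + alt_sum (upd v k y)).
rewrite /alt_sum mulr_sumr -big_split.
by apply: eq_bigr => s _ /=; rewrite !upd_comp T_linear mulrDr mulrCA.
Qed.

Lemma alt_sum_upd_comb v k (b : 'I_N -> R) :
  alt_sum (upd v k (\sum_l b l *: v l)) = b k * alt_sum v.
Proof.
rewrite (lin_sum (alt_sum_linear v k)) (bigD1 k) //= big1 ?addr0.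
  by rewrite (linZ (alt_sum_linear v k)) upd_id.
move=> l neq_lk; rewrite (linZ (alt_sum_linear v k)) (@alt_sum_repeat _ k l).
  by rewrite /GRing.scale /= mulr0.
- by rewrite eq_sym.
- by rewrite /upd eqxx (negbTE neq_lk).
Qed.

Lemma alt_sum_coef_eq0 v k (b : 'I_N -> R) : alt_sum v != 0 ->
  alt_sum (upd v k (\sum_l b l *: v l)) = 0 -> b k = 0.
Proof.
by rewrite alt_sum_upd_comb => nz_v /eqP; rewrite mulf_eq0 (negbTE nz_v) orbF => /eqP.
Qed.

Lemma alt_sum_free v (b : 'I_N -> R) : alt_sum v != 0 ->
  \sum_l b l *: v l = 0 -> forall k, b k = 0.
Proof.
move=> nz_v comb0 k; apply: (alt_sum_coef_eq0 nz_v).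
by rewrite comb0 (lin0 (alt_sum_linear v k)).
Qed.

End AlternatingSum.

Lemma fam_atE (R : fieldType) (V : lmodType R) m (v : 'I_m -> V) k (lt_km : (k < m)%N) :
  fam_at v k = v (Ordinal lt_km).
Proof. by rewrite /fam_at insubT. Qed.

Section EtaOmegaPow.
Variables (R : numFieldType) (V : lmodType R) (n : nat).
Variables (eta : V -> R) (om : V -> V -> R).

Lemma fam_at_upd N (u : 'I_N -> V) k z i :
  fam_at (upd u k z) i = if i == val k then z else fam_at u i.
Proof.
rewrite /fam_at; case: insubP => [o _ <-|] /=; first by rewrite /upd.
by case: eqP => // ->; rewrite ltn_ord.
Qed.

Definition eo_term (u : 'I_(n.*2.+1) -> V) : R :=
  eta (fam_at u 0) * \prod_(i < n) om (fam_at u i.*2.+1) (fam_at u i.*2.+2).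

Lemma eo_term_slot u k :
  (exists C, forall w, eo_term (upd u k w) = eta w * C) \/
  (exists C c, forall w, eo_term (upd u k w) = om w c * C) \/
  (exists C c, forall w, eo_term (upd u k w) = om c w * C).
Proof.
rewrite /eo_term.
set P := fun w => \prod_(i < n) om (if i.*2.+1 == val k then w else fam_at u i.*2.+1)
     (if i.*2.+2 == val k then w else fam_at u i.*2.+2).
have EP w : \prod_(i < n) om (fam_at (upd u k w) i.*2.+1) (fam_at (upd u k w) i.*2.+2) = P w.
  by apply: eq_bigr => i _; rewrite !fam_at_upd.
have lt_k : (val k < n.*2.+1)%N := ltn_ord k.
case: (posnP (val k)) => [k0|k_gt0].
  have EP0 w : P w = P 0 by apply: eq_bigr => i _; rewrite k0.
  by left; exists (P 0) => w; rewrite EP fam_at_upd EP0 k0.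
(* slot k > 0 lies in the factor of index (k - 1) / 2 of the product *)
pose j := (val k).-1./2.
have lt_jn : (j < n)%N by rewrite /j; lia.
have PE w : P w =
   om (if j.*2.+1 == val k then w else fam_at u j.*2.+1)
      (if j.*2.+2 == val k then w else fam_at u j.*2.+2) *
   \prod_(i < n | i != j :> nat) om (fam_at u i.*2.+1) (fam_at u i.*2.+2).
  rewrite /P (bigD1 (Ordinal lt_jn)) //=; congr (_ * _); apply: eq_bigr => i neq_ij.
  have neq_ij' : (i : nat) != j := neq_ij.
  suff [-> ->] : (i.*2.+1 == val k) = false /\ (i.*2.+2 == val k) = false by [].
  by split; apply/negbTE/eqP => h; move/eqP: neq_ij'; rewrite /j; lia.
right; case: (boolP (odd (val k).-1)) => odd_k.
  have e1 : (j.*2.+1 == val k) = false by apply/negbTE/eqP; rewrite /j; lia.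
  have e2 : (j.*2.+2 == val k) by apply/eqP; rewrite /j; lia.
  right; eexists; eexists => w.
  by rewrite EP PE fam_at_upd (ltn_eqF k_gt0) e1 e2 mulrCA.
have e1 : (j.*2.+1 == val k) by apply/eqP; rewrite /j; lia.
have e2 : (j.*2.+2 == val k) = false by apply/negbTE/eqP; rewrite /j; lia.
left; eexists; eexists => w.
by rewrite EP PE fam_at_upd (ltn_eqF k_gt0) e1 e2 mulrCA.
Qed.

Hypotheses (eta_lin : linear_form eta) (om_form : two_form om).

Lemma eo_term_linear u k a x y :
  eo_term (upd u k (a *: x + y)) = a * eo_term (upd u k x) + eo_term (upd u k y).
Proof.
case: (eo_term_slot u k) => [[C E]|[[C [c E]]|[C [c E]]]]; rewrite !E mulrA -mulrDl.
- by rewrite eta_lin.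
- by case: om_form => ->.
- by case: om_form => _ [-> _].
Qed.

Lemma eo_term_radical u k d : eta d = 0 -> (forall x, om d x = 0) ->
  eo_term (upd u k d) = 0.
Proof.
move=> eta_d om_d; have om_d' x : om x d = 0 by rewrite (two_form_skew om_form) om_d oppr0.
case: (eo_term_slot u k) => [[C E]|[[C [c E]]|[C [c E]]]];
  by rewrite E ?eta_d ?om_d ?om_d' mul0r.
Qed.

End EtaOmegaPow.

Lemma big_perm_lift (M : nmodType) N (F : 'S_N.+1 -> M) :
  \sum_s F s = \sum_(j < N.+1) \sum_(s : 'S_N) F (lift_perm ord0 j s).
Proof.
rewrite (partition_big (fun s : 'S_N.+1 => s ord0) predT) //=.
apply: eq_bigr => j _; rewrite (reindex (lift_perm ord0 j)); last first.
  pose ulsf i (s : 'S_N.+1) k := odflt k (unlift (s i) (s (lift i k))).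
  have ulsfK i (s : 'S_N.+1) k : lift (s i) (ulsf i s k) = s (lift i k).
    rewrite /ulsf; have:= neq_lift i k.
    by rewrite -(can_eq (permK s)) => /unlift_some[] ? ? ->.
  have inj_ulsf : injective (ulsf ord0 _).
    move=> s; apply: can_inj (ulsf (s ord0) s^-1%g) _ => k'.
    by rewrite {1}/ulsf ulsfK !permK liftK.
  exists (fun s => perm (inj_ulsf s)) => [s _ | s].
    by apply/permP => k'; rewrite permE /ulsf lift_perm_lift lift_perm_id liftK.
  move/(s _ =P _) => si0; apply/permP => k.
  case: (unliftP ord0 k) => [k'|] ->; rewrite ?lift_perm_id //.
  by rewrite lift_perm_lift -si0 permE ulsfK.
by apply: eq_bigl => s; rewrite lift_perm_id eqxx.
Qed.

Section OmegaPow.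
Variables (R : fieldType) (V : lmodType R) (n : nat) (om : V -> V -> R).

Lemma eq_omega_pow (W : lmodType R) (om' : W -> W -> R)
   (v : 'I_(n.*2) -> V) (w : 'I_(n.*2) -> W) :
  (forall a b, om (v a) (v b) = om' (w a) (w b)) -> omega_pow om v = omega_pow om' w.
Proof.
move=> eq_om; apply: eq_bigr => s _; congr (_ * _); apply: eq_bigr => i _.
have lt_in : (i < n)%N := ltn_ord i.
have lt1 : (i.*2 < n.*2)%N by lia.
have lt2 : (i.*2.+1 < n.*2)%N by lia.
by rewrite !(fam_atE _ lt1) !(fam_atE _ lt2) /= eq_om.
Qed.

Lemma eta_omega_pow_expand (eta : V -> R) (v : 'I_(n.*2.+1) -> V) :
  eta_omega_pow eta om v =
  \sum_(j < n.*2.+1) (-1) ^+ j * eta (v j) * omega_pow om (v \o lift j).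
Proof.
rewrite /eta_omega_pow big_perm_lift; apply: eq_bigr => j _.
rewrite /omega_pow mulr_sumr; apply: eq_bigr => s _.
rewrite odd_lift_perm /= signr_addb signr_odd -!mulrA; congr (_ * _).
rewrite (fam_atE _ (ltn0Sn _)) /= (_ : Ordinal _ = ord0) ?lift_perm_id; last exact: val_inj.
rewrite mulrCA; congr (_ * (_ * _)); apply: eq_bigr => i _.
have lt_in : (i < n)%N := ltn_ord i.
have lt1 : (i.*2.+1 < n.*2.+1)%N by lia.
have lt2 : (i.*2.+2 < n.*2.+1)%N by lia.
have lt1' : (i.*2 < n.*2)%N by lia.
have lt2' : (i.*2.+1 < n.*2)%N by lia.
rewrite (fam_atE _ lt1) (fam_atE _ lt2) (fam_atE _ lt1') (fam_atE _ lt2') /=.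
have -> : Ordinal lt1 = lift ord0 (Ordinal lt1') by apply: val_inj.
have -> : Ordinal lt2 = lift ord0 (Ordinal lt2') by apply: val_inj.
by rewrite !lift_perm_lift.
Qed.

End OmegaPow.

Section NondegenerateEtaOmega.
Variables (R : numFieldType) (V : vectType R) (n : nat).
Variables (eta : V -> R) (om : V -> V -> R) (v : 'I_(n.*2.+1) -> V).
Hypotheses (eta_lin : linear_form eta) (om_form : two_form om).
Hypotheses (dimV : \dim {:V} = n.*2.+1) (v_nondeg : eta_omega_pow eta om v != 0).

Let v_alt_nondeg : alt_sum (@eo_term R V n eta om) v != 0 := v_nondeg.

Lemma eta_omega_pow_free (b : 'I_(n.*2.+1) -> R) :
  \sum_i b i *: v i = 0 -> forall i, b i = 0.
Proof.
exact: (alt_sum_free (eo_term_linear (n := n) eta_lin om_form) (v := v) (b := b) v_alt_nondeg).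
Qed.

Lemma eta_omega_pow_span x : x = \sum_i coord [tuple v i | i < n.*2.+1] i x *: v i.
Proof.
set X := [tuple v i | i < n.*2.+1].
have X_nth (i : 'I_(n.*2.+1)) : X`_i = v i by rewrite -tnth_nth tnth_mktuple.
have X_basis : basis_of fullv X.
  rewrite basisEfree subvf size_tuple dimV leqnn !andbT.
  apply/freeP => b comb0 i; apply: eta_omega_pow_free => //.
  by rewrite -[RHS]comb0; apply: eq_bigr => j _; rewrite X_nth.
have x_span : x \in <<X>>%VS by rewrite (span_basis X_basis) memvf.
rewrite {1}(coord_span x_span).
by apply: eq_bigr => j _; rewrite X_nth.
Qed.

Lemma radical_eq0 d : eta d = 0 -> (forall x, om d x = 0) -> d = 0.
Proof.
move=> eta_d om_d; rewrite (eta_omega_pow_span d) big1 // => k _.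
suff -> : coord [tuple v i | i < n.*2.+1] k d = 0 by rewrite scale0r.
apply: (alt_sum_coef_eq0 (eo_term_linear (n := n) eta_lin om_form)
  (b := fun i => coord [tuple v i | i < n.*2.+1] i d) v_alt_nondeg).
rewrite -eta_omega_pow_span.
by rewrite /alt_sum big1 // => s _; rewrite upd_comp eo_term_radical ?mulr0.
Qed.

Lemma reeb_exists : exists xi, is_reeb eta om xi.
Proof.
pose G : 'M[R]_(n.*2.+1) := \matrix_(k, l) om (v k) (v l).
have detG0 : \det G == 0.
  have GT : G^T = - G by apply/matrixP => k l; rewrite !mxE (two_form_skew om_form).
  apply/eqP/self_add_eq0; rewrite -{1}det_tr GT -scaleN1r detZ.
  by rewrite -signr_odd /= odd_double /= expr1 mulN1r addNr.
case/det0P: detG0 => c nz_c cG0.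
pose u := \sum_k c 0 k *: v k.
have om_u y : om u y = 0.
  rewrite (eta_omega_pow_span y) (om_sumr om_form) big1 // => l _.
  rewrite (omZr om_form) (om_suml om_form).
  suff -> : \sum_k om (c 0 k *: v k) (v l) = (c *m G) 0 l by rewrite cG0 mxE mulr0.
  by rewrite mxE; apply: eq_bigr => k _; rewrite mxE (omZl om_form).
have eta_u : eta u != 0.
  apply: contra nz_c => /eqP eta_u; apply/eqP/rowP => k.
  by rewrite mxE; apply: (eta_omega_pow_free (radical_eq0 eta_u om_u)).
exists ((eta u)^-1 *: u); split; first by rewrite (etaZ eta_lin) mulVf.
by move=> y; rewrite (omZl om_form) om_u mulr0.
Qed.

Lemma reeb_unique xi1 xi2 : is_reeb eta om xi1 -> is_reeb eta om xi2 -> xi1 = xi2.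
Proof.
move=> [eta1 om1] [eta2 om2]; apply/eqP; rewrite -subr_eq0; apply/eqP/radical_eq0.
  by rewrite (etaB eta_lin) eta1 eta2 subrr.
by move=> y; rewrite (omBl om_form) om1 om2 subrr.
Qed.

Lemma omega_pow_lift_neq0 : exists j, omega_pow om (v \o lift j) != 0.
Proof.
apply/existsP; apply: contraR v_nondeg; rewrite negb_exists => /forallP om_lift0.
rewrite eta_omega_pow_expand big1 // => j _.
by have /negPn/eqP -> := om_lift0 j; rewrite mulr0.
Qed.

End NondegenerateEtaOmega.

Section Restriction.
Variables (R : fieldType) (V : vectType R) (U : {vspace V}).
Variables (br : V -> V -> V) (brU : subvs_of U -> subvs_of U -> subvs_of U).
Hypotheses (lie : is_lie br) (brUE : forall x y, vsval (brU x y) = br (vsval x) (vsval y)).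

Lemma is_lie_restrict : is_lie brU.
Proof.
case: lie => [[br_linl br_linr] [br_alt br_jacobi]].
split; first split.
- by move=> a x y z; apply: subvs_inj; rewrite !brUE !linearP /= !brUE br_linl.
- by move=> a x y z; apply: subvs_inj; rewrite !brUE !linearP /= !brUE br_linr.
split; first by move=> x; apply: subvs_inj; rewrite brUE br_alt.
by move=> x y z; apply: subvs_inj; rewrite !raddfD /= !brUE br_jacobi.
Qed.

Lemma derivation_restrict z (DU : subvs_of U -> subvs_of U) :
  (forall x, vsval (DU x) = br z (vsval x)) -> derivation brU DU.
Proof.
move=> DUE; split.
  by move=> a x y; apply: subvs_inj; rewrite !DUE !linearP /= !DUE; case: lie => -[_ ->].
move=> x y; apply: subvs_inj; rewrite !raddfD /= !DUE !brUE !DUE.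
exact: lie_ad_derivation.
Qed.

End Restriction.

Lemma two_form_restrict (R : fieldType) (V : vectType R) (U : {vspace V})
    (om : V -> V -> R) :
  two_form om -> two_form (fun x y : subvs_of U => om (vsval x) (vsval y)).
Proof.
move=> om_form.
split; first by move=> a x y z; rewrite linearP /= (omDl om_form) (omZl om_form).
split; first by move=> a x y z; rewrite linearP /= (omDr om_form) (omZr om_form).
by case: om_form => _ [_ om_alt] x; apply: om_alt.
Qed.

Section KernelOfForm.
Variables (R : fieldType) (V : vectType R) (eta : V -> R) (eta_lin : linear_form eta).

Local Notation U := (lker (linfun (eta : V -> R^o))).

Lemma mem_lker_form x : (x \in U) = (eta x == 0).
Proof. by rewrite memv_ker (lfunE (lin_pack (linear_form_linear eta_lin))). Qed.

Lemma dim_lker_form x0 : eta x0 != 0 -> (\dim {:subvs_of U}).+1 = \dim {:V}.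
Proof.
move=> eta_x0; rewrite [\dim {:subvs_of U}]dimvf; set f := linfun (eta : V -> R^o).
have := limg_ker_dim f fullv; rewrite capfv => <-; rewrite -addn1; congr (_ + _)%N.
apply/esym/eqP; rewrite eqn_leq; apply/andP; split.
  by have := dimvS (subvf (f @: fullv)); rewrite dimvf.
rewrite lt0n dimv_eq0; apply: contraNneq eta_x0 => f_fullv0.
have := memv_img f (memvf x0).
by rewrite f_fullv0 memv0 (lfunE (lin_pack (linear_form_linear eta_lin))).
Qed.

End KernelOfForm.

Lemma coord_vbasis_inj (R : fieldType) (K : vectType R) (u w : K) :
  (forall i, coord (vbasis fullv) i u = coord (vbasis fullv) i w) -> u = w.
Proof.
move=> eq_coord; rewrite (coord_vbasis (memvf u)) (coord_vbasis (memvf w)).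
by apply: eq_bigr => i _; rewrite eq_coord.
Qed.

Section CosymplecticToSymplectic.
Variables (R : numFieldType) (V : vectType R) (alpha : R).
Variables (br : V -> V -> V) (eta : V -> R) (om : V -> V -> R) (xi : V).
Hypotheses (lie : is_lie br) (eta_lin : linear_form eta) (om_form : two_form om).
Hypotheses (eta_closed : forall x y, d1 br eta x y = 0).
Hypothesis om_d2 : forall x y z, d2 br om x y z = 2 * alpha * wedge12 eta om x y z.
Hypotheses (eta_xi : eta xi = 1) (om_xi : forall y, om xi y = 0).

Local Notation U := (lker (linfun (eta : V -> R^o))).
Local Notation h := (subvs_of U).
Local Notation Om := (fun x y : h => om (vsval x) (vsval y)).

Let om_xi' y : om y xi = 0.
Proof. by rewrite (two_form_skew om_form) om_xi oppr0. Qed.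

Let eta_h (x : h) : eta (vsval x) = 0.
Proof. by apply/eqP; rewrite -(mem_lker_form eta_lin) subvsP. Qed.

Lemma br_in_lker x y : br x y \in U.
Proof.
rewrite (mem_lker_form eta_lin).
by have := eta_closed x y; rewrite /d1 => /eqP; rewrite oppr_eq0.
Qed.

Definition ker_br (x y : h) : h := vsproj U (br (vsval x) (vsval y)).
Definition ker_ad (x : h) : h := vsproj U (br xi (vsval x)).

Lemma ker_brE x y : vsval (ker_br x y) = br (vsval x) (vsval y).
Proof. exact/vsprojK/br_in_lker. Qed.

Lemma ker_adE x : vsval (ker_ad x) = br xi (vsval x).
Proof. exact/vsprojK/br_in_lker. Qed.

Lemma ker_br_closed x y z : d2 ker_br Om x y z = 0.
Proof.
have := om_d2 (vsval x) (vsval y) (vsval z).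
by rewrite /d2 /wedge12 !eta_h !mul0r !addr0 mulr0 !ker_brE.
Qed.

Lemma ker_ad_inf_symplectic : inf_symplectic Om (fun x => ker_ad x + alpha *: x).
Proof.
move=> x y; rewrite !linearD !linearZ /= !ker_adE.
have := om_d2 xi (vsval x) (vsval y).
rewrite /d2 /wedge12 !eta_h eta_xi om_xi' (bracket_skew lie.1 lie.2.1 (vsval y) xi).
rewrite (omNl om_form) (two_form_skew om_form (br xi (vsval y))).
rewrite (omDl om_form) (omDr om_form) (omZl om_form) (omZr om_form).
rewrite subr0 opprK mul1r !mul0r !addr0 => d2_xi.
by rewrite addrACA -mulr2n -mulr_natl mulrA -d2_xi -opprD subrr.
Qed.

Definition reeb_proj (x : V) : h := vsproj U (x - eta x *: xi).

Lemma reeb_projE x : vsval (reeb_proj x) = x - eta x *: xi.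
Proof.
apply/vsprojK; rewrite (mem_lker_form eta_lin).
by rewrite (etaB eta_lin) (etaZ eta_lin) eta_xi mulr1 subrr.
Qed.

Lemma om_reeb_proj x y : Om (reeb_proj x) (reeb_proj y) = om x y.
Proof.
rewrite /= !reeb_projE (omBl om_form) !(omBr om_form) !(omZl om_form) !(omZr om_form).
by rewrite !om_xi !om_xi' !mulr0 !subr0.
Qed.

Lemma ker_omega_pow_neq0 n (v : 'I_(n.*2.+1) -> V) :
  eta_omega_pow eta om v != 0 -> exists w : 'I_(n.*2) -> h, omega_pow Om w != 0.
Proof.
move=> v_nondeg; have [j om_j] := omega_pow_lift_neq0 v_nondeg.
exists (reeb_proj \o v \o lift j).
rewrite -(eq_omega_pow (om := om) (om' := Om) (v := v \o lift j)) // => a b.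
by rewrite /= om_reeb_proj.
Qed.

Lemma ker_symplectic n : (exists v : 'I_(n.*2.+1) -> V, eta_omega_pow eta om v != 0) ->
  symplectic n ker_br Om.
Proof.
move=> [v v_nondeg]; split; first exact: two_form_restrict.
by split; [exact: ker_br_closed | exact: ker_omega_pow_neq0 v_nondeg].
Qed.

Definition reeb_split (p : (R^o * h)%type) : V := p.1 *: xi + vsval p.2.

Lemma eta_reeb_split p : eta (reeb_split p) = p.1.
Proof. by rewrite (etaD eta_lin) (etaZ eta_lin) eta_xi eta_h mulr1 addr0. Qed.

Lemma om_reeb_split p q : om (reeb_split p) (reeb_split q) = Om p.2 q.2.
Proof.
rewrite (omDl om_form) !(omDr om_form) !(omZl om_form) !(omZr om_form) !om_xi !om_xi'.
by rewrite !mulr0 !add0r.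
Qed.

Lemma reeb_split_bij : bijective reeb_split.
Proof.
exists (fun x => ((eta x : R^o), reeb_proj x)).
  case=> a x; rewrite eta_reeb_split; congr pair; apply: val_inj.
  by rewrite /= reeb_projE eta_reeb_split addrC addKr.
by move=> x; rewrite /reeb_split /= reeb_projE addrC subrK.
Qed.

Lemma reeb_split_br p q :
  reeb_split (ext_br ker_br ker_ad p q) = br (reeb_split p) (reeb_split q).
Proof.
case: p q => [s x] [t y]; have [br_bil [br_alt _]] := lie.
rewrite /reeb_split /ext_br /= scale0r add0r ker_brE !ker_adE.
rewrite (brDl br_bil) !(brDr br_bil) !(brZl br_bil) !(brZr br_bil) br_alt.
rewrite (bracket_skew br_bil br_alt (vsval x) xi) scalerN !scaler0 add0r.
by rewrite [RHS]addrA [RHS]addrC addrA.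
Qed.

End CosymplecticToSymplectic.

Lemma scale_pairE (R : pzRingType) (A B : lmodType R) a (u : A) (v : B) :
  a *: ((u, v) : (A * B)%type) = (a *: u, a *: v).
Proof. by []. Qed.

Lemma add_pairE (R : pzRingType) (A B : lmodType R) (u u' : A) (v v' : B) :
  ((u, v) : (A * B)%type) + (u', v') = (u + u', v + v').
Proof. by []. Qed.

Lemma zero_pairE (R : pzRingType) (A B : lmodType R) : 0 = (0, 0) :> A * B.
Proof. by []. Qed.

Lemma scale_regularE (R : pzRingType) a (s : R^o) : a *: s = a * s.
Proof. by []. Qed.

Section SemidirectExtension.
Variables (R : numFieldType) (H : vectType R) (brh : H -> H -> H) (D : H -> H).
Hypotheses (lie : is_lie brh) (D_der : derivation brh D).

Lemma ext_br_lie : is_lie (ext_br brh D).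
Proof.
have [br_bil [br_alt br_jacobi]] := lie; have [D_lin D_leibniz] := D_der.
split; first split.
- move=> a [s x] [t y] [r z]; rewrite /ext_br /= scale_pairE add_pairE.
  congr pair; first by rewrite scaler0 addr0.
  rewrite (brDl br_bil) (brZl br_bil) (linD D_lin) (linZ D_lin).
  apply: coord_vbasis_inj => i; rewrite !linearE ?linearN /= ?scale_regularE; ring.
- move=> a [s x] [t y] [r z]; rewrite /ext_br /= scale_pairE add_pairE.
  congr pair; first by rewrite scaler0 addr0.
  rewrite (brDr br_bil) (brZr br_bil) (linD D_lin) (linZ D_lin).
  apply: coord_vbasis_inj => i; rewrite !linearE ?linearN /= ?scale_regularE; ring.
split; first by move=> [s x]; rewrite /ext_br /= br_alt add0r subrr.
move=> [s x] [t y] [r z]; rewrite /ext_br /= !add_pairE [RHS]zero_pairE.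
congr pair; first by rewrite !addr0.
rewrite !scale0r !subr0 !(brDr br_bil) !(brNr br_bil) !(brZr br_bil).
rewrite !(linD D_lin) !(linN D_lin) !(linZ D_lin) !D_leibniz.
rewrite (bracket_skew br_bil br_alt z (D y)) (bracket_skew br_bil br_alt x (D z)).
rewrite (bracket_skew br_bil br_alt y (D x)).
have -> : brh z (brh x y) = - (brh x (brh y z) + brh y (brh z x)).
  by apply/eqP; rewrite -subr_eq0 opprK addrC br_jacobi.
apply: coord_vbasis_inj => i; rewrite !linearE ?linearN /= ?scale_regularE; ring.
Qed.

Variables (alpha : R) (Om : H -> H -> R).
Hypotheses (Om_form : two_form Om) (Om_closed : forall x y z, d2 brh Om x y z = 0).
Hypothesis D_inf : inf_symplectic Om (fun x => D x + alpha *: x).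

Definition ext_eta (p : (R^o * H)%type) : R := p.1.
Definition ext_form (p q : (R^o * H)%type) : R := Om p.2 q.2.

Lemma ext_form_d2 p q r :
  d2 (ext_br brh D) ext_form p q r = 2 * alpha * wedge12 ext_eta ext_form p q r.
Proof.
have [D_lin _] := D_der.
have D_skew u v : Om (D u) v = Om (D v) u - 2 * alpha * Om u v.
  have := D_inf u v; rewrite (omDl Om_form) (omDr Om_form) (omZl Om_form) (omZr Om_form).
  by rewrite (two_form_skew Om_form u (D v)) => D_uv; rewrite -[LHS]subr0 -D_uv; ring.
have cyclic_zx x y z : Om (brh z x) y = - Om (brh x y) z - Om (brh y z) x.
  by rewrite -[LHS]addr0 -(Om_closed x y z) /d2; ring.
case: p q r => [s x] [t y] [r z]; rewrite /d2 /wedge12 /ext_form /ext_eta /ext_br /=.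
rewrite !(omDl Om_form) ?(omNl Om_form) !(omZl Om_form).
rewrite (D_skew z y) (D_skew z x) (D_skew x y) cyclic_zx.
rewrite (two_form_skew Om_form z y); ring.
Qed.

Lemma ext_reeb : is_reeb ext_eta ext_form (1, 0).
Proof. by split=> // y; rewrite /ext_form /= (om0l Om_form). Qed.

Lemma ext_eta_omega_pow_neq0 n (v : 'I_(n.*2) -> H) : omega_pow Om v != 0 ->
  exists w : 'I_(n.*2.+1) -> _, eta_omega_pow ext_eta ext_form w != 0.
Proof.
move=> v_nondeg.
pose w (j : 'I_(n.*2.+1)) : (R^o * H)%type :=
  if unlift ord0 j is Some k then (0, v k) else (1, 0).
exists w; rewrite eta_omega_pow_expand (bigD1 ord0) //= big1 ?addr0.
  rewrite /w unlift_none expr0 !mul1r /ext_eta /=.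
  rewrite (eq_omega_pow (om := ext_form) (om' := Om) (v := w \o lift ord0) (w := v)) // => a b.
  by rewrite /w /= !liftK.
move=> j j_neq0; rewrite /w /ext_eta.
by case: unliftP j_neq0 => [k _|->] //=; rewrite ?eqxx // mulr0 mul0r.
Qed.

Lemma ext_alpha_cosymplectic n : (exists v : 'I_(n.*2) -> H, omega_pow Om v != 0) ->
  alpha_cosymplectic n (ext_br brh D) alpha ext_eta ext_form.
Proof.
move=> [v v_nondeg]; split; last split; last exact: ext_form_d2.
  split; first by [].
  split; last exact: ext_eta_omega_pow_neq0 v_nondeg.
  split; first by move=> a p q r; rewrite /ext_form /= (omDl Om_form) (omZl Om_form).
  split; first by move=> a p q r; rewrite /ext_form /= (omDr Om_form) (omZr Om_form).
  by case: Om_form => _ [_ Om_alt] p; apply: Om_alt.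
by move=> p q; rewrite /d1 oppr0.
Qed.

End SemidirectExtension.

Lemma dim_ext (R : fieldType) (H : vectType R) : \dim {:(R^o * H)%type} = (\dim {:H}).+1.
Proof. by rewrite dimvf /= dimvf. Qed.

Theorem mainTheorem4 (R : realType) (alpha : R) (n : nat) (hn : (1 <= n)%N) :
  (* forward: alpha-cosymplectic g  |-->  (ker eta, omega|_h, ad_xi|_h) *)
  (forall (V : vectType R) (br : V -> V -> V) (eta : V -> R) (om : V -> V -> R),
     \dim {: V} = n.*2.+1 -> is_lie br -> alpha_cosymplectic n br alpha eta om ->
     (exists! xi : V, is_reeb eta om xi) /\
     forall xi : V, is_reeb eta om xi ->
       let h := subvs_of (lker (linfun (eta : V -> R^o))) in
       let Om := fun x y : h => om (vsval x) (vsval y) in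
       \dim {: h} = n.*2 /\
       exists (brh : h -> h -> h) (D : h -> h),
         (forall x y, vsval (brh x y) = br (vsval x) (vsval y)) /\
         (forall x, vsval (D x) = br xi (vsval x)) /\
         is_lie brh /\ symplectic n brh Om /\ derivation brh D /\
         inf_symplectic Om (fun x => D x + alpha *: x) /\
         (* the inverse construction applied to (h, Om, D) gives back g *)
         let phi := fun p : (R^o * h)%type => p.1 *: xi + vsval p.2 in
         bijective phi /\
         (forall p q, phi (ext_br brh D p q) = br (phi p) (phi q)) /\
         (forall p, eta (phi p) = p.1) /\
         (forall p q, om (phi p) (phi q) = Om p.2 q.2)) /\
  (* backward: (h, Om, D)  |-->  g = R xi (+) h *)
  (forall (H : vectType R) (brh : H -> H -> H) (Om : H -> H -> R) (D : H -> H),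
     \dim {: H} = n.*2 -> is_lie brh -> symplectic n brh Om -> derivation brh D ->
     inf_symplectic Om (fun x => D x + alpha *: x) ->
     let brg := ext_br brh D in
     let etag := fun p : (R^o * H)%type => (p.1 : R) in
     let omg := fun p q : (R^o * H)%type => Om p.2 q.2 in
     \dim {: (R^o * H)%type} = n.*2.+1 /\ is_lie brg /\
     alpha_cosymplectic n brg alpha etag omg /\
     is_reeb etag omg (1, 0) /\
     (* the forward construction applied to g gives back (h, Om, D) *)
     (forall p, etag p = 0 <-> p = (0, p.2)) /\
     (forall x y, brg (0, x) (0, y) = (0, brh x y)) /\
     (forall x, brg (1, 0) (0, x) = (0, D x)) /\
     (forall x y, omg (0, x) (0, y) = Om x y)).
Proof.
split=> [V br eta om dimV lie [[eta_lin [om_form nondeg]] [eta_closed om_d2]] |].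
  have [v v_nondeg] := nondeg; split.
    have [xi xi_reeb] := reeb_exists eta_lin om_form dimV v_nondeg.
    exists xi; split=> // xi'.
    exact: (reeb_unique eta_lin om_form dimV v_nondeg xi_reeb).
  move=> xi [eta_xi om_xi] h Om; split.
    apply/eq_add_S.
    by rewrite (dim_lker_form eta_lin (x0 := xi)) ?dimV ?eta_xi ?oner_neq0.
  have brE := ker_brE eta_lin eta_closed; have adE := ker_adE xi eta_lin eta_closed.
  exists (ker_br br (eta := eta)), (ker_ad br (eta := eta) xi).
  split; first exact: brE.
  split; first exact: adE.
  split; first exact: (is_lie_restrict lie brE).
  split; first exact: (ker_symplectic eta_lin om_form eta_closed om_d2 eta_xi om_xi nondeg).
  split; first exact: (derivation_restrict lie brE adE).
  split.
    exact: (ker_ad_inf_symplectic lie eta_lin om_form eta_closed om_d2 eta_xi om_xi).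
  split; first exact: (reeb_split_bij eta_lin eta_xi).
  split; first exact: (reeb_split_br xi lie eta_lin eta_closed).
  split; first exact: (eta_reeb_split eta_lin eta_xi).
  exact: (om_reeb_split om_form om_xi).
move=> H brh Om D dimH lie [Om_form [Om_closed nondeg]] D_der D_inf brg etag omg.
split; first by rewrite dim_ext dimH.
split; first exact: ext_br_lie.
split; first exact: ext_alpha_cosymplectic.
split; first exact: ext_reeb.
split; first by move=> [a x] /=; split=> [->|[]].
split; first by move=> x y; rewrite /brg /ext_br /= !scale0r subr0 addr0.
split; last by [].
by move=> x; rewrite /brg /ext_br /= (br0l lie.1) (lin0 D_der.1) scale1r scale0r subr0 add0r.
Qed.
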